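(* Let $B$ be a Noetherian ring of dimension $d$, let $(b_1,\ldots,b_n)\in\operatorname{Um}_n(B)$ with $n\ge2$, and let $y\in B$ satisfy $Bb_1+By=B$. Then for any finite family of prime ideals $\nu_1,\ldots,\nu_p\subset B$ there exist an element $b\in Bb_2+\cdots+Bb_n$ and an infinite sequence of natural numbers $c_1<c_2<\cdots$ such that $b_1+by^{c_j}\notin\nu_i$ for all $i=1,\ldots,p$ and all $j=1,2,\ldots$.
   Context: Rings are commutative with unit. $\operatorname{Um}_n(B)$ is the set of rows $(b_1,\ldots,b_n)\in B^n$ with $Bb_1+\cdots+Bb_n=B$. *)

From mathcomp Require Import all_boot all_order all_algebra.
Set Implicit Arguments. Unset Strict Implicit. Unset Printing Implicit Defensive.
Import GRing.Theory.
Local Open Scope ring_scope.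

Definition is_ideal (R : comNzRingType) (I : R -> Prop) : Prop :=
  [/\ I 0, (forall x y, I x -> I y -> I (x + y)) & (forall a x, I x -> I (a * x))].

Definition is_prime_ideal (R : comNzRingType) (P : R -> Prop) : Prop :=
  [/\ is_ideal P, ~ P 1 & (forall x y, P (x * y) -> P x \/ P y)].

Definition noetherian (R : comNzRingType) : Prop :=
  forall I : nat -> R -> Prop,
    (forall k, is_ideal (I k)) ->
    (forall k x, I k x -> I k.+1 x) ->
    exists N, forall k, (N <= k)%N -> forall x, I k x <-> I N x.

Definition prime_chain (R : comNzRingType) (k : nat) (P : nat -> R -> Prop) : Prop :=
  (forall i, (i <= k)%N -> is_prime_ideal (P i)) /\
  (forall i, (i < k)%N ->
     (forall x, P i x -> P i.+1 x) /\ exists x, P i.+1 x /\ ~ P i x).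

Definition krull_dim (R : comNzRingType) (d : nat) : Prop :=
  (exists P, prime_chain (R:=R) d P) /\
  (forall k P, prime_chain (R:=R) k P -> (k <= d)%N).

From mathcomp Require Import all_boot all_order all_algebra.
From mathcomp Require Import ring.
From Stdlib Require Import Classical.
Set Implicit Arguments. Unset Strict Implicit.
Import GRing.Theory.
Local Open Scope ring_scope.

(* Since b_1 is unimodular modulo J = (b_2, ..., b_n), the coset b_1 + J is not
   covered by finitely many primes (prime avoidance), so some b in J gives
   b_1 + b outside every nu_i not containing y.  For a fixed prime P the set of
   exponents c with b_1 + b y^c in P is then harmless: if y is in P, then b_1
   is not and every c > 0 works; otherwise either y^m = 1 mod P for some m > 0,
   and every multiple of m works, or two such exponents c1 < c2 would force
   y^(c2 - c1) = 1 mod P, so all c beyond the first bad one work.  In every case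
   all large multiples of some m > 0 work, and a common m for all nu_i yields
   the sequence c_j. *)

Definition on_large_multiples (G : nat -> Prop) : Prop :=
  exists m K, (0 < m)%N /\ forall c, (K <= c)%N -> (m %| c)%N -> G c.

Lemma on_large_multiples_impl (G1 G2 : nat -> Prop) :
  (forall c, G1 c -> G2 c) -> on_large_multiples G1 -> on_large_multiples G2.
Proof. by move=> G12 [m [K [m_gt0 G1P]]]; exists m, K; split => // c Kc mc; auto. Qed.

Lemma on_large_multiplesI (G1 G2 : nat -> Prop) :
  on_large_multiples G1 -> on_large_multiples G2 ->
  on_large_multiples (fun c => G1 c /\ G2 c).
Proof.
move=> [m1 [K1 [m1_gt0 G1P]]] [m2 [K2 [m2_gt0 G2P]]].
exists (m1 * m2)%N, (maxn K1 K2); split; first by rewrite muln_gt0 m1_gt0.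
move=> c; rewrite geq_max => /andP[K1c K2c] mc; split.
- by apply: G1P => //; apply: dvdn_trans mc; apply: dvdn_mulr.
- by apply: G2P => //; apply: dvdn_trans mc; apply: dvdn_mull.
Qed.

Lemma on_large_multiples_all (I : eqType) (s : seq I) (G : I -> nat -> Prop) :
  (forall i, i \in s -> on_large_multiples (G i)) ->
  on_large_multiples (fun c => forall i, i \in s -> G i c).
Proof.
elim: s => [|i s IH] Gs; first by exists 1%N, 0%N.
have Gi := Gs i (mem_head i s).
have Gs' := IH (fun j js => Gs j (mem_behead (s := i :: s) js)).
apply: on_large_multiples_impl (on_large_multiplesI Gi Gs') => c [Gic Gsc] j.
by rewrite inE => /predU1P[-> //|]; apply: Gsc.
Qed.

Lemma on_large_multiples_increasing (G : nat -> Prop) :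
  on_large_multiples G ->
  exists c : nat -> nat, (forall j, (c j < c j.+1)%N) /\ forall j, G (c j).
Proof.
move=> [m [K [m_gt0 GP]]]; exists (fun j => m * (j + K))%N; split.
  by move=> j; rewrite ltn_pmul2l // addSn.
move=> j; apply: GP; last exact: dvdn_mulr.
exact: leq_trans (leq_addl j K) (leq_pmull _ m_gt0).
Qed.

Section Ideals.

Variable B : comNzRingType.
Implicit Types (I J P Q : B -> Prop) (x z : B).

Lemma ideal0 I : is_ideal I -> I 0. Proof. by case. Qed.

Lemma idealD I x z : is_ideal I -> I x -> I z -> I (x + z).
Proof. by case=> _ + _; apply. Qed.

Lemma idealMl I a x : is_ideal I -> I x -> I (a * x).
Proof. by case=> _ _; apply. Qed.

Lemma idealMr I a x : is_ideal I -> I x -> I (x * a).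
Proof. by rewrite mulrC; apply: idealMl. Qed.

Lemma idealB I x z : is_ideal I -> I x -> I z -> I (x - z).
Proof. by move=> Iid Ix Iz; rewrite -mulN1r; apply: idealD => //; apply: idealMl. Qed.

Lemma idealDr I x z : is_ideal I -> I x -> I (x + z) -> I z.
Proof. by move=> Iid Ix Ixz; rewrite -(addKr x z) addrC; apply: idealB. Qed.

Lemma ideal_lin_comb (b : nat -> B) m n :
  is_ideal (fun x => exists a : nat -> B, x = \sum_(m <= i < n) a i * b i).
Proof.
split.
- by exists (fun=> 0); rewrite big1 // => i _; rewrite mul0r.
- move=> _ _ [a1 ->] [a2 ->]; exists (fun i => a1 i + a2 i).
  by rewrite -big_split; apply: eq_bigr => i _; rewrite mulrDl.
- move=> r _ [a ->]; exists (fun i => r * a i).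
  by rewrite mulr_sumr; apply: eq_bigr => i _; rewrite mulrA.
Qed.

Lemma ideal_exprM_sub1 I y m t :
  is_ideal I -> I (y ^+ m - 1) -> I (y ^+ (m * t) - 1).
Proof.
move=> Iid Iym; elim: t => [|t IH]; first by rewrite muln0 expr0 subrr; apply: ideal0.
have -> : y ^+ (m * t.+1) - 1 = y ^+ (m * t) * (y ^+ m - 1) + (y ^+ (m * t) - 1).
  by rewrite mulnS exprD; ring.
by apply: idealD => //; apply: idealMl.
Qed.

Lemma prime_ideal_exprn P y k : is_prime_ideal P -> ~ P y -> ~ P (y ^+ k).
Proof.
case=> _ P1 Pmul Py; elim: k => [|k IH]; first by rewrite expr0.
by rewrite exprS => /Pmul[].
Qed.

Lemma common_element_outside_prime P (Is : nat -> B -> Prop) (S : nat -> Prop) k :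
  is_prime_ideal P -> (forall i, S i -> is_ideal (Is i)) ->
  (forall i, (i < k)%N -> S i -> exists q, Is i q /\ ~ P q) ->
  exists q, (forall i, (i < k)%N -> S i -> Is i q) /\ ~ P q.
Proof.
move=> [_ P1 Pmul] Sid; elim: k => [|k IH] outP; first by exists 1.
have [|q [Isq Pq]] := IH; first by move=> i /ltnW; apply: outP.
have [Sk | nSk] := classic (S k); last first.
  by exists q; split => // i; rewrite ltnS leq_eqVlt => /predU1P[-> //|]; apply: Isq.
have [qk [Isqk Pqk]] := outP k (ltnSn k) Sk.
exists (q * qk); split; last by case/Pmul.
move=> i; rewrite ltnS leq_eqVlt => /predU1P[-> _|ik Si]; first exact: idealMl (Sid k Sk) _.
exact: idealMr (Sid i Si) (Isq i ik Si).
Qed.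

Section CosetAvoidance.

Variables (J : B -> Prop) (b1 r j0 : B).
Hypotheses (Jid : is_ideal J) (Jj0 : J j0) (b1_unimodular : r * b1 + j0 = 1).

Lemma ideal_not_subset_prime Q x :
  is_prime_ideal Q -> J x -> Q (b1 + x) -> exists j, J j /\ ~ Q j.
Proof.
move=> [Qid Q1 _] Jx Qb1x.
have [Qj0 | ?] := classic (Q j0); last by exists j0.
have [Qx | ?] := classic (Q x); last by exists x.
have Qb1 : Q b1 by rewrite -(addrK x b1); apply: idealB.
by case: Q1; rewrite -b1_unimodular; apply: idealD => //; apply: idealMl.
Qed.

(* Induction on the number of primes: the primes contained in the last prime Q
   are avoided automatically once Q is, and the others supply a factor q outside
   Q that is used to correct the element given by induction. *)
Lemma coset_prime_avoidance k (Ps : nat -> B -> Prop) (S : nat -> Prop) :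
  (forall i, S i -> is_prime_ideal (Ps i)) ->
  exists x, J x /\ forall i, (i < k)%N -> S i -> ~ Ps i (b1 + x).
Proof.
elim: k Ps S => [|k IH] Ps S Sprime; first by exists 0; split => //; apply: ideal0.
have [Sk | nSk] := classic (S k); last first.
  have [x [Jx avoid]] := IH Ps S Sprime.
  by exists x; split => // i; rewrite ltnS leq_eqVlt => /predU1P[-> //|]; apply: avoid.
have Qprime := Sprime k Sk; have [Qid _ Qmul] := Qprime.
pose S' i := S i /\ ~ (forall z, Ps i z -> Ps k z).
have [x [Jx avoid']] := IH Ps S' (fun i Si => Sprime i Si.1).
suff [x' [Jx' [Qx' avoid'']]] : exists x', J x' /\ ~ Ps k (b1 + x') /\
    forall i, (i < k)%N -> S' i -> ~ Ps i (b1 + x').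
  exists x'; split => // i; rewrite ltnS leq_eqVlt => /predU1P[-> //|ik Si].
  have [sub | nsub] := classic (forall z, Ps i z -> Ps k z); last exact: avoid''.
  by move/sub.
have [Qb1x | ?] := classic (Ps k (b1 + x)); last by exists x.
have [j [Jj Qj]] := ideal_not_subset_prime Qprime Jx Qb1x.
have [||q [Psq Qq]] := common_element_outside_prime (Is := Ps) (S := S') (k := k) Qprime.
- by move=> i [Si _]; case: (Sprime i Si).
- move=> i _ [_ nsub]; have [z not_sub] := not_all_ex_not _ _ nsub.
  by exists z; apply: imply_to_and.
exists (x + q * j); split; first by apply: idealD => //; apply: idealMl.
split=> [|i ik S'i].
  by rewrite addrA => /(idealDr Qid Qb1x)/Qmul[].
have Piid : is_ideal (Ps i) by case: (Sprime i S'i.1).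
have Piqj : Ps i (q * j) by apply: idealMr Piid (Psq i ik S'i).
move=> Pix'; apply: (avoid' i ik S'i).
by rewrite -(addrK (q * j) (b1 + x)) -(addrA b1); apply: idealB.
Qed.

End CosetAvoidance.

Section ExponentsOutsidePrime.

Variables (P : B -> Prop) (b1 bb y : B).
Hypothesis Pprime : is_prime_ideal P.

Lemma on_large_multiples_of_mem u v :
  u * b1 + v * y = 1 -> P y -> on_large_multiples (fun c => ~ P (b1 + bb * y ^+ c)).
Proof.
move=> b1y_unimodular Py; have [Pid P1 _] := Pprime.
exists 1%N, 1%N; split=> // c c_gt0 _ Pc; apply: P1.
have Pyc : P (y ^+ c) by rewrite -(prednK c_gt0) exprS; apply: idealMr.
have Pb1 : P b1 by rewrite -(addrK (bb * y ^+ c) b1); apply: idealB => //; apply: idealMl.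
by rewrite -b1y_unimodular; apply: (idealD Pid); apply: idealMl.
Qed.

Lemma exponent_gap_root_of_unity c1 c2 :
  ~ P y -> ~ P (b1 + bb) -> (c1 < c2)%N ->
  P (b1 + bb * y ^+ c1) -> P (b1 + bb * y ^+ c2) -> P (y ^+ (c2 - c1) - 1).
Proof.
move=> Py Pb1bb c12 Pc1 Pc2; have [Pid _ Pmul] := Pprime.
have : P (bb * y ^+ c1 * (y ^+ (c2 - c1) - 1)).
  have -> : bb * y ^+ c1 * (y ^+ (c2 - c1) - 1) =
      (b1 + bb * y ^+ c2) - (b1 + bb * y ^+ c1).
    by rewrite -{2}(subnKC (ltnW c12)) exprD; ring.
  exact: idealB.
case/Pmul=> [/Pmul[Pbb|/(prime_ideal_exprn Pprime Py)//]|//].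
case: Pb1bb; have -> : b1 + bb = (b1 + bb * y ^+ c1) + bb * (1 - y ^+ c1) by ring.
by apply: (idealD Pid) => //; apply: idealMr.
Qed.

Lemma on_large_multiples_of_notin :
  ~ P y -> ~ P (b1 + bb) -> on_large_multiples (fun c => ~ P (b1 + bb * y ^+ c)).
Proof.
move=> Py Pb1bb; have [Pid _ _] := Pprime.
have [[m [m_gt0 Pym]] | no_root] := classic (exists m, (0 < m)%N /\ P (y ^+ m - 1)).
  exists m, 0%N; split=> // _ _ /dvdnP[t ->] Pc; apply: Pb1bb.
  have Pymt : P (y ^+ (m * t) - 1) by apply: ideal_exprM_sub1.
  have -> : b1 + bb = (b1 + bb * y ^+ (t * m)) - bb * (y ^+ (m * t) - 1).
    by rewrite mulnC; ring.
  by apply: (idealB Pid) => //; apply: idealMl.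
have [[c0 Pc0] | none] := classic (exists c0, P (b1 + bb * y ^+ c0)); last first.
  by exists 1%N, 0%N; split=> // c _ _ Pc; apply: none; exists c.
exists 1%N, c0.+1; split=> // c c0c _ Pc; apply: no_root; exists (c - c0)%N.
by rewrite subn_gt0; split=> //; apply: exponent_gap_root_of_unity.
Qed.

End ExponentsOutsidePrime.

End Ideals.

Theorem corollary7p2 (B : comNzRingType) (d : nat) (n : nat) (b : nat -> B) (y : B)
  (p : nat) (nu : nat -> B -> Prop) :
  noetherian B -> krull_dim B d ->
  (2 <= n)%N ->
  (exists a : nat -> B, \sum_(1 <= i < n.+1) a i * b i = 1) ->
  (exists u v : B, u * b 1%N + v * y = 1) ->
  (forall i, (1 <= i <= p)%N -> is_prime_ideal (nu i)) ->
  exists bb : B,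
    (exists a : nat -> B, bb = \sum_(2 <= i < n.+1) a i * b i) /\
    exists c : nat -> nat,
      (forall j, (c j < c j.+1)%N) /\
      (forall i j, (1 <= i <= p)%N -> ~ nu i (b 1%N + bb * y ^+ c j)).
Proof.
move=> _ _ n_ge2 [a b_unimodular] [u [v b1y_unimodular]] nu_prime.
have b1_unimodular : a 1%N * b 1%N + \sum_(2 <= i < n.+1) a i * b i = 1.
  by rewrite -b_unimodular [RHS](@big_ltn _ _ _ 1%N) // ltnW.
have [bb [Jbb avoid]] := coset_prime_avoidance (ideal_lin_comb b 2 n.+1)
  (ex_intro _ a erefl) b1_unimodular p.+1 (S := fun i => (1 <= i <= p)%N /\ ~ nu i y)
  (fun i Si => nu_prime i Si.1).
exists bb; split=> //.
have [|c [c_incr c_good]] := on_large_multiples_increasing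
  (@on_large_multiples_all nat (index_iota 1 p.+1)
     (fun i c => ~ nu i (b 1%N + bb * y ^+ c)) _).
  move=> i; rewrite mem_index_iota ltnS => ip.
  have [nu_y | nu_y] := classic (nu i y).
    exact (on_large_multiples_of_mem bb (nu_prime i ip) b1y_unimodular nu_y).
  have i_lt : (i < p.+1)%N by case/andP: ip.
  exact (on_large_multiples_of_notin (nu_prime i ip) nu_y (avoid i i_lt (conj ip nu_y))).
exists c; split=> // i j ip; apply: c_good.
by rewrite mem_index_iota ltnS.
Qed.
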